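(* Let $k\ge2$, $d=k(k+1)/2$, and $r=r_k$. For $n\in\{0,\dots,d-1\}$ let $M_n=[\mu^n_{ji}]_{j,i=0}^2$ be the $3\times3$ matrix with entries $$\mu^n_{j0}=\tfrac1r\big((p^j_{n0})^2-p^j_{n0}p^j_{n1}-p^j_{n0}p^j_{n2}+p^j_{n1}p^j_{n2}\big),$$ $$\mu^n_{j1}=\tfrac1r\big((p^j_{n1})^2-p^j_{n0}p^j_{n1}+p^j_{n0}p^j_{n2}-p^j_{n1}p^j_{n2}\big),$$ $$\mu^n_{j2}=\tfrac1r\big((p^j_{n2})^2+p^j_{n0}p^j_{n1}-p^j_{n0}p^j_{n2}-p^j_{n1}p^j_{n2}\big).$$ Then for every $n$ and every cell $C=F_wK$ of $SG_k$, $$\begin{pmatrix}\nu_0(F_nC)\\\nu_1(F_nC)\\\nu_2(F_nC)\end{pmatrix}=M_n\begin{pmatrix}\nu_0(C)\\\nu_1(C)\\\nu_2(C)\end{pmatrix}.$$ Consequently, as vectors of measures, $$\begin{pmatrix}\nu_0\\\nu_1\\\nu_2\end{pmatrix}=\sum_{n=0}^{d-1}M_n\begin{pmatrix}\nu_0\circ F_n^{-1}\\\nu_1\circ F_n^{-1}\\\nu_2\circ F_n^{-1}\end{pmatrix},$$ where $(\nu_i\circ F_n^{-1})(A)=\nu_i(F_n^{-1}(A))$ for Borel $A\subseteq K$.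
   Context: Let $q_0,q_1,q_2$ be the vertices of a unit equilateral triangle $T\subset\mathbb R^2$. Fix $k\ge2$ and $d=k(k+1)/2$. Let $F_n(x)=x/k+b_n$, $n=0,\dots,d-1$, be the similitudes mapping $T$ onto the $d$ triangles of side $1/k$ with the same orientation as $T$ in the subdivision of $T$ into $k^2$ triangles. $SG_k$ is $K=\bigcup_nF_n(K)$. Notation: $F_w=F_{w_1}\circ\cdots\circ F_{w_m}$, and a cell is a set $F_wK$. $V_0=\{q_0,q_1,q_2\}$ and $V_m=\bigcup_{|w|=m}F_w(V_0)$. The graph $\Gamma_m$ on $V_m$ has $x\sim_my$ iff $x\ne y$ and $x,y\in F_w(V_0)$ for some $|w|=m$. Energy: $\mathcal E_m(u)=r^{-m}\sum_{x\sim_my}(u(x)-u(y))^2$, where $r=r_k$ is the unique $r>0$ with $\min\{\mathcal E_1(\tilde u):\tilde u|_{V_0}=u\}=\mathcal E_0(u)$ for all $u$ on $V_0$. Then $\mathcal E(u)=\lim_m\mathcal E_m(u|_{V_m})$ for continuous $u$ on $K$. A function $h$ is harmonic if $\mathcal E_m(h|_{V_m})=\mathcal E_0(h|_{V_0})$ for all $m$. $h_i$ ($i=0,1,2$) is the harmonic function with $h_i(q_j)=\delta_{ij}$. Energy measures: $\nu_u$ is the unique Borel measure with $\nu_u(F_wK)=r^{-|w|}\mathcal E(u\circ F_w)$, and $\nu_i:=\nu_{h_i}$. Probabilities: $p^j_{ni}$ is the probability that the simple random walk on $\Gamma_1$ started at $F_n(q_i)$ hits $q_j$ before hitting either of the other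 two points of $V_0$ (equivalently $p^j_{ni}=h_j(F_n(q_i))$). *)

From Stdlib Require Import Reals Lra List.
Open Scope R_scope.

Definition pt := (R * R)%type.
Definition padd (x y : pt) : pt := (fst x + fst y, snd x + snd y).
Definition pscale (c : R) (x : pt) : pt := (c * fst x, c * snd x).
Definition dist2 (x y : pt) : R :=
  sqrt ((fst x - fst y) ^ 2 + (snd x - snd y) ^ 2).

Definition q (i : nat) : pt :=
  match i with
  | O => (0, 0)
  | S O => (1, 0)
  | _ => (1 / 2, sqrt 3 / 2)
  end.

Definition dnum (k : nat) : nat := (k * (k + 1) / 2)%nat.

Definition sumR (N : nat) (f : nat -> R) : R :=
  fold_right Rplus 0 (map f (seq 0 N)).

(** Upward triangles of side 1/k in the subdivision of T are indexed by
    (a,b) with a+b < k : the triangle with vertices q0 + (a q1 + b q2)/k + q_i/k.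
    [idx] is an enumeration n |-> (a,b) of these d triangles. *)
Definition valid_enum (k : nat) (idx : nat -> nat * nat) : Prop :=
  (forall n, (n < dnum k)%nat -> (fst (idx n) + snd (idx n) < k)%nat) /\
  (forall n m, (n < dnum k)%nat -> (m < dnum k)%nat -> idx n = idx m -> n = m) /\
  (forall a b, (a + b < k)%nat -> exists n, (n < dnum k)%nat /\ idx n = (a, b)).

Definition Fmap (k : nat) (idx : nat -> nat * nat) (n : nat) (x : pt) : pt :=
  padd (pscale (/ INR k) x)
       (pscale (/ INR k) (padd (pscale (INR (fst (idx n))) (q 1))
                               (pscale (INR (snd (idx n))) (q 2)))).

Definition Fw (k : nat) (idx : nat -> nat * nat) (w : list nat) (x : pt) : pt :=
  fold_right (fun n y => Fmap k idx n y) x w.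

Definition word_ok (k : nat) (w : list nat) : Prop :=
  Forall (fun n => (n < dnum k)%nat) w.

Fixpoint words (d m : nat) : list (list nat) :=
  match m with
  | O => nil :: nil
  | S m' => flat_map (fun w => map (fun n => n :: w) (seq 0 d)) (words d m')
  end.

Definition in_T (x : pt) : Prop :=
  exists s t, 0 <= s /\ 0 <= t /\ s + t <= 1 /\
              x = padd (pscale s (q 1)) (pscale t (q 2)).

(** SG_k: K = intersection over m of the union of the level-m images of T
    (the attractor of the IFS {F_n}). *)
Definition in_K (k : nat) (idx : nat -> nat * nat) (x : pt) : Prop :=
  forall m : nat, exists w, word_ok k w /\ length w = m /\
                  exists y, in_T y /\ x = Fw k idx w y.

Definition cell (k : nat) (idx : nat -> nat * nat) (w : list nat) (x : pt) : Prop :=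
  exists y, in_K k idx y /\ x = Fw k idx w y.

Definition cell_energy (k : nat) (idx : nat -> nat * nat) (u : pt -> R)
  (w : list nat) : R :=
  (u (Fw k idx w (q 0)) - u (Fw k idx w (q 1))) ^ 2 +
  (u (Fw k idx w (q 0)) - u (Fw k idx w (q 2))) ^ 2 +
  (u (Fw k idx w (q 1)) - u (Fw k idx w (q 2))) ^ 2.

(** E_m(u) = r^{-m} sum_{x ~_m y} (u x - u y)^2 (each edge counted once;
    the edges of Gamma_m are exactly the edges of the level-m cells, each
    belonging to a single cell). *)
Definition Em (k : nat) (idx : nat -> nat * nat) (r : R) (u : pt -> R) (m : nat) : R :=
  / r ^ m * fold_right Rplus 0 (map (cell_energy k idx u) (words (dnum k) m)).

Definition renorm (k : nat) (idx : nat -> nat * nat) (r : R) : Prop :=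
  0 < r /\
  forall u : pt -> R,
    (forall v : pt -> R, (forall i, (i < 3)%nat -> v (q i) = u (q i)) ->
        Em k idx r u 0 <= Em k idx r v 1) /\
    (exists v : pt -> R, (forall i, (i < 3)%nat -> v (q i) = u (q i)) /\
        Em k idx r v 1 = Em k idx r u 0).

Definition harmonic (k : nat) (idx : nat -> nat * nat) (r : R) (h : pt -> R) : Prop :=
  forall m, Em k idx r h m = Em k idx r h 0.

Definition continuous_on_K (k : nat) (idx : nat -> nat * nat) (h : pt -> R) : Prop :=
  forall x, in_K k idx x -> forall eps, 0 < eps -> exists delta, 0 < delta /\
    forall y, in_K k idx y -> dist2 x y < delta -> Rabs (h x - h y) < eps.

Definition is_open (U : pt -> Prop) : Prop :=
  forall x, U x -> exists e, 0 < e /\ forall y, dist2 x y < e -> U y.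

Inductive borel : (pt -> Prop) -> Prop :=
| borel_open U : is_open U -> borel U
| borel_compl A : borel A -> borel (fun x => ~ A x)
| borel_cunion (A : nat -> pt -> Prop) :
    (forall n, borel (A n)) -> borel (fun x => exists n, A n x).

Definition borel_measure_on (K : pt -> Prop) (nu : (pt -> Prop) -> R) : Prop :=
  nu (fun _ => False) = 0 /\
  (forall A, borel A -> (forall x, A x -> K x) -> 0 <= nu A) /\
  (forall A : nat -> pt -> Prop,
     (forall n, borel (A n) /\ forall x, A n x -> K x) ->
     (forall n m x, n <> m -> A n x -> A m x -> False) ->
     infinite_sum (fun n => nu (A n)) (nu (fun x => exists n, A n x))).

Definition pp (k : nat) (idx : nat -> nat * nat) (h : nat -> pt -> R)
  (j n i : nat) : R := h j (Fmap k idx n (q i)).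

Definition mu (k : nat) (idx : nat -> nat * nat) (r : R) (h : nat -> pt -> R)
  (n j i : nat) : R :=
  let p0 := pp k idx h j n 0 in
  let p1 := pp k idx h j n 1 in
  let p2 := pp k idx h j n 2 in
  match i with
  | O => / r * (p0 ^ 2 - p0 * p1 - p0 * p2 + p1 * p2)
  | S O => / r * (p1 ^ 2 - p0 * p1 + p0 * p2 - p1 * p2)
  | _ => / r * (p2 ^ 2 + p0 * p1 - p0 * p2 - p1 * p2)
  end.

(* On a cell F_w K, nu_i is the energy of h_i on that cell, and harmonicity reduces this
   energy to the one-cell energy of the boundary values on F_w V_0.  On a cell F_n C the
   function h_j is the harmonic function sum_i p^j_{ni} h_i of C, so expanding its one-cell
   energy gives the matrix M_n; the expansion closes up because h_0 + h_1 + h_2 = 1 makes the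
   three edge differences along every edge sum to zero.
   For Borel sets, the B with nu_j(F_n B) = sum_i mu^n_{ji} nu_i(B) form a Dynkin system.
   It contains the cells and the Borel subsets of overlaps of sibling cells, which are null
   because the energy of a harmonic function is additive over the children of a cell; these
   sets form a pi-system generating the Borel subsets of K.  Splitting a Borel set along the
   first-level cells, again up to null overlaps, gives the decomposition of nu_j. *)

From Stdlib Require Import Reals List Lra Lia.
From Stdlib Require Import Classical FunctionalExtensionality PropExtensionality.
Open Scope R_scope.

Definition lsum {A} (f : A -> R) (L : list A) : R := fold_right Rplus 0 (map f L).

Lemma lsum_app {A} (f : A -> R) L1 L2 : lsum f (L1 ++ L2) = lsum f L1 + lsum f L2.
Proof. unfold lsum; induction L1 as [|a L1 IH]; simpl; [lra | rewrite IH; lra]. Qed.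

Lemma lsum_ext {A} (f g : A -> R) L : (forall x, In x L -> f x = g x) -> lsum f L = lsum g L.
Proof. intros H. unfold lsum. f_equal. apply map_ext_in. exact H. Qed.

Lemma lsum_scal {A} (f : A -> R) c L : lsum (fun x => c * f x) L = c * lsum f L.
Proof. unfold lsum; induction L as [|a L IH]; simpl; [lra | rewrite IH; lra]. Qed.

Lemma lsum_plus {A} (f g : A -> R) L : lsum (fun x => f x + g x) L = lsum f L + lsum g L.
Proof. unfold lsum; induction L as [|a L IH]; simpl; [lra | rewrite IH; lra]. Qed.

Lemma lsum_minus {A} (f g : A -> R) L : lsum (fun x => f x - g x) L = lsum f L - lsum g L.
Proof. unfold lsum; induction L as [|a L IH]; simpl; [lra | rewrite IH; lra]. Qed.

Lemma lsum_const0 {A} (L : list A) : lsum (fun _ => 0) L = 0.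
Proof. unfold lsum; induction L as [|a L IH]; simpl; [lra | rewrite IH; lra]. Qed.

Lemma lsum_le {A} (f g : A -> R) L : (forall x, In x L -> f x <= g x) -> lsum f L <= lsum g L.
Proof.
  unfold lsum; induction L as [|a L IH]; intros H; simpl; [lra|].
  apply Rplus_le_compat.
  - apply H. left. reflexivity.
  - apply IH. intros x Hx. apply H. right. exact Hx.
Qed.

Lemma lsum_nonneg {A} (f : A -> R) L : (forall x, In x L -> 0 <= f x) -> 0 <= lsum f L.
Proof. intros H. rewrite <- (lsum_const0 L). apply lsum_le. exact H. Qed.

Lemma lsum_eq0_nonneg {A} (f : A -> R) L :
  (forall x, In x L -> 0 <= f x) -> lsum f L = 0 -> forall x, In x L -> f x = 0.
Proof.
  induction L as [|a L IH]; intros H E x Hx; [destruct Hx|].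
  assert (Ha : 0 <= f a) by (apply H; left; reflexivity).
  assert (HL : 0 <= lsum f L) by (apply lsum_nonneg; intros; apply H; right; assumption).
  change (f a + lsum f L = 0) in E.
  destruct Hx as [<-|Hx]; [lra|].
  apply IH; [intros; apply H; right; assumption | lra | assumption].
Qed.

Lemma lsum_swap {A B} (g : A -> B -> R) L1 L2 :
  lsum (fun a => lsum (g a) L2) L1 = lsum (fun b => lsum (fun a => g a b) L1) L2.
Proof.
  induction L1 as [|a L1 IH]; simpl.
  - symmetry. apply lsum_const0.
  - change (lsum (g a) L2 + lsum (fun a => lsum (g a) L2) L1
            = lsum (fun b => g a b + lsum (fun a => g a b) L1) L2).
    rewrite IH, lsum_plus. reflexivity.
Qed.

Lemma lsum_flat_map {A B} (f : B -> R) (g : A -> list B) L :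
  lsum f (flat_map g L) = lsum (fun a => lsum f (g a)) L.
Proof. induction L as [|a L IH]; simpl; [reflexivity | rewrite lsum_app, IH; reflexivity]. Qed.

Lemma sumR_lsum N f : sumR N f = lsum f (seq 0 N).
Proof. reflexivity. Qed.

Lemma sumR_S N f : sumR (S N) f = sumR N f + f N.
Proof.
  rewrite !sumR_lsum, seq_S, lsum_app. unfold lsum; simpl. lra.
Qed.

Lemma sumR_3 f : sumR 3 f = f 0%nat + f 1%nat + f 2%nat.
Proof. unfold sumR; simpl. lra. Qed.

Lemma In_words d m w : In w (words d m) <-> Forall (fun n => (n < d)%nat) w /\ length w = m.
Proof.
  revert w; induction m as [|m IH]; intros w; simpl.
  - split.
    + intros [<-|[]]. split; auto.
    + intros [_ H]. destruct w; [auto | discriminate].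
  - rewrite in_flat_map. split.
    + intros [w' [Hw' Hin]]. apply in_map_iff in Hin. destruct Hin as [n [<- Hn]].
      apply IH in Hw'. apply in_seq in Hn. destruct Hw'.
      split; [constructor; auto; lia | simpl; lia].
    + intros [HF HL]. destruct w as [|n w']; [discriminate|].
      inversion HF; subst. exists w'. split.
      * apply IH. split; auto.
      * apply in_map_iff. exists n. split; auto. apply in_seq. lia.
Qed.

Lemma Un_cv_const_eq (u : nat -> R) c l : (forall m, u m = c) -> Un_cv u l -> l = c.
Proof.
  intros Hu Hc. apply (UL_sequence u); auto.
  intros e He. exists 0%nat. intros. rewrite Hu. unfold Rdist. rewrite Rminus_diag, Rabs_R0. lra.
Qed.

Lemma linear_coef_eq0_of_min (B Q : R) :
  0 <= Q -> (forall t, 0 <= 2 * t * B + t * t * Q) -> B = 0.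
Proof.
  intros HQ H. set (t := - B / (Q + 1)).
  assert (Hs : 0 <= (2 * t * B + t * t * Q) * ((Q + 1) * (Q + 1))).
  { apply Rmult_le_pos; [apply H | nra]. }
  replace ((2 * t * B + t * t * Q) * ((Q + 1) * (Q + 1))) with (- B * B * (Q + 2)) in Hs
    by (unfold t; field; lra).
  nra.
Qed.

Section Energy.
Variables (k : nat) (idx : nat -> nat * nat) (r : R).
Hypothesis hr : renorm k idx r.

Definition edge_diff (u : pt -> R) (w : list nat) (a b : nat) : R :=
  u (Fw k idx w (q a)) - u (Fw k idx w (q b)).

Definition cell_form (u v : pt -> R) (w : list nat) : R :=
  edge_diff u w 0 1 * edge_diff v w 0 1 + edge_diff u w 0 2 * edge_diff v w 0 2
  + edge_diff u w 1 2 * edge_diff v w 1 2.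

Definition energy_form (u v : pt -> R) (m : nat) : R :=
  / r ^ m * lsum (cell_form u v) (words (dnum k) m).

Lemma cell_energy_edges u w :
  cell_energy k idx u w = edge_diff u w 0 1 ^ 2 + edge_diff u w 0 2 ^ 2 + edge_diff u w 1 2 ^ 2.
Proof. reflexivity. Qed.

Lemma Em_form u m : Em k idx r u m = energy_form u u m.
Proof.
  unfold Em, energy_form. f_equal. apply lsum_ext. intros w _.
  rewrite cell_energy_edges. unfold cell_form. ring.
Qed.

Lemma Em_lsum u m : Em k idx r u m = / r ^ m * lsum (cell_energy k idx u) (words (dnum k) m).
Proof. reflexivity. Qed.

Lemma r_pos : 0 < r.
Proof. apply hr. Qed.

Lemma Em_0 u : Em k idx r u 0 = cell_energy k idx u nil.
Proof. unfold Em. simpl. lra. Qed.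

Lemma cell_energy_ge0 u w : 0 <= cell_energy k idx u w.
Proof. unfold cell_energy. repeat apply Rplus_le_le_0_compat; apply pow2_ge_0. Qed.

Lemma Em_ge0 u m : 0 <= Em k idx r u m.
Proof.
  apply Rmult_le_pos.
  - left. apply Rinv_0_lt_compat, pow_lt, r_pos.
  - apply lsum_nonneg. intros. apply cell_energy_ge0.
Qed.

Lemma Em_S u m :
  Em k idx r u (S m) = / r * sumR (dnum k) (fun n => Em k idx r (fun x => u (Fmap k idx n x)) m).
Proof.
  rewrite sumR_lsum, !Em_lsum. simpl words. rewrite lsum_flat_map.
  rewrite (lsum_ext _ (fun w => lsum (fun n => cell_energy k idx (fun x => u (Fmap k idx n x)) w)
                                      (seq 0 (dnum k)))).
  - rewrite lsum_swap. simpl pow. rewrite Rinv_mult, Rmult_assoc, <- lsum_scal. reflexivity.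
  - intros w _. unfold lsum. rewrite map_map. reflexivity.
Qed.

Lemma Em_0_le u m : Em k idx r u 0 <= Em k idx r u m.
Proof.
  revert u; induction m as [|m IH]; intros u; [lra|].
  apply Rle_trans with (Em k idx r u 1).
  - apply (proj2 hr u). auto.
  - rewrite !Em_S. apply Rmult_le_compat_l.
    + left. apply Rinv_0_lt_compat, r_pos.
    + apply lsum_le. intros n _. apply IH.
Qed.

Lemma harmonic_Fmap g n :
  harmonic k idx r g -> (n < dnum k)%nat -> harmonic k idx r (fun x => g (Fmap k idx n x)).
Proof.
  intros Hg Hn m.
  assert (E : sumR (dnum k) (fun l => Em k idx r (fun x => g (Fmap k idx l x)) m
                                     - Em k idx r (fun x => g (Fmap k idx l x)) 0) = 0).
  { rewrite sumR_lsum, lsum_minus.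
    pose proof (Hg (S m)) as E1. rewrite <- (Hg 1%nat), !Em_S, !sumR_lsum in E1.
    apply Rmult_eq_reg_l in E1; [lra|].
    apply Rinv_neq_0_compat. apply Rgt_not_eq, r_pos. }
  apply lsum_eq0_nonneg with (x := n) in E.
  - lra.
  - intros l _. pose proof (Em_0_le (fun x => g (Fmap k idx l x)) m). lra.
  - apply in_seq. lia.
Qed.

Lemma harmonic_Fw g w :
  harmonic k idx r g -> word_ok k w -> harmonic k idx r (fun x => g (Fw k idx w x)).
Proof.
  revert g. induction w as [|n w IH]; intros g Hg Hw; [exact Hg|].
  inversion Hw; subst. apply (IH (fun x => g (Fmap k idx n x))); auto.
  apply harmonic_Fmap; auto.
Qed.

Lemma harmonic_const c : harmonic k idx r (fun _ => c).
Proof.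
  assert (Z : forall m, Em k idx r (fun _ => c) m = 0).
  { intros m. rewrite Em_lsum, (lsum_ext _ (fun _ => 0)), lsum_const0; [ring|].
    intros. unfold cell_energy. ring. }
  intros m. rewrite !Z. reflexivity.
Qed.

(* Dirichlet principle: a harmonic function minimizes every E_m among functions with its
   boundary values, so it is orthogonal to every function vanishing on V_0. *)
Lemma energy_form_harmonic_orth g phi m :
  harmonic k idx r g -> (forall i, (i < 3)%nat -> phi (q i) = 0) -> energy_form g phi m = 0.
Proof.
  intros Hg Hphi.
  apply (linear_coef_eq0_of_min _ (energy_form phi phi m)).
  - rewrite <- Em_form. apply Em_ge0.
  - intros t.
    assert (Hexp : Em k idx r (fun x => g x + t * phi x) m
                   = Em k idx r g m + 2 * t * energy_form g phi m + t * t * energy_form phi phi m).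
    { rewrite !Em_form. unfold energy_form.
      rewrite (lsum_ext (cell_form _ _) (fun w => cell_form g g w + (2 * t) * cell_form g phi w
                                                  + (t * t) * cell_form phi phi w)).
      - rewrite !lsum_plus, !lsum_scal. ring.
      - intros. unfold cell_form, edge_diff. ring. }
    assert (Hmin : Em k idx r g m <= Em k idx r (fun x => g x + t * phi x) m).
    { rewrite (Hg m), !Em_0.
      replace (cell_energy k idx g nil) with (cell_energy k idx (fun x => g x + t * phi x) nil).
      - rewrite <- Em_0. apply Em_0_le.
      - unfold cell_energy. cbn [Fw fold_right]. rewrite !Hphi by lia. ring. }
    lra.
Qed.

Lemma energy_form_self_eq0 u m :
  energy_form u u m = 0 -> forall w, word_ok k w -> length w = m ->
  forall a b, (a < 3)%nat -> (b < 3)%nat -> edge_diff u w a b = 0.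
Proof.
  intros E w Hw Hl a b Ha Hb.
  apply Rmult_integral in E. destruct E as [E|E].
  { exfalso. revert E. apply Rinv_neq_0_compat, pow_nonzero, Rgt_not_eq, r_pos. }
  apply lsum_eq0_nonneg with (x := w) in E.
  - unfold cell_form in E.
    assert (D01 : edge_diff u w 0 1 = 0) by nra.
    assert (D02 : edge_diff u w 0 2 = 0) by nra.
    unfold edge_diff in *. destruct a as [|[|[|]]], b as [|[|[|]]]; try lia; lra.
  - intros. unfold cell_form. nra.
  - apply In_words. auto.
Qed.

Lemma energy_form_combination_l g f0 f1 f2 c0 c1 c2 phi m :
  energy_form (fun x => g x - (c0 * f0 x + c1 * f1 x + c2 * f2 x)) phi m
  = energy_form g phi m - (c0 * energy_form f0 phi m + c1 * energy_form f1 phi m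
                           + c2 * energy_form f2 phi m).
Proof.
  unfold energy_form.
  rewrite (lsum_ext _ (fun w => cell_form g phi w - (c0 * cell_form f0 phi w
                             + c1 * cell_form f1 phi w + c2 * cell_form f2 phi w))).
  - rewrite lsum_minus, !lsum_plus, !lsum_scal. ring.
  - intros. unfold cell_form, edge_diff. ring.
Qed.

(* Uniqueness of harmonic extension, in linear form: harmonic functions related linearly on
   V_0 are related in the same way along every edge of every cell. *)
Lemma edge_diff_harmonic_combination g f0 f1 f2 c0 c1 c2 :
  harmonic k idx r g -> harmonic k idx r f0 -> harmonic k idx r f1 -> harmonic k idx r f2 ->
  (forall l, (l < 3)%nat -> g (q l) = c0 * f0 (q l) + c1 * f1 (q l) + c2 * f2 (q l)) ->
  forall w a b, word_ok k w -> (a < 3)%nat -> (b < 3)%nat ->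
  edge_diff g w a b = c0 * edge_diff f0 w a b + c1 * edge_diff f1 w a b + c2 * edge_diff f2 w a b.
Proof.
  intros Hg H0 H1 H2 Hbd w a b Hw Ha Hb.
  set (psi := fun x => g x - (c0 * f0 x + c1 * f1 x + c2 * f2 x)).
  assert (Hpsi : forall l, (l < 3)%nat -> psi (q l) = 0).
  { intros l Hl. unfold psi. rewrite Hbd by exact Hl. ring. }
  assert (E : energy_form psi psi (length w) = 0).
  { unfold psi at 1. rewrite energy_form_combination_l, !energy_form_harmonic_orth by assumption.
    ring. }
  pose proof (energy_form_self_eq0 psi _ E w Hw eq_refl a b Ha Hb) as Z.
  unfold edge_diff, psi in Z |- *. lra.
Qed.

End Energy.

(* The identity behind the entries of M_n: r mu^n_{ji} = (p_i - p_i')(p_i - p_i''). *)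
Lemma square_combination_identity p0 p1 p2 D0 D1 D2 :
  D0 + D1 + D2 = 0 ->
  (p0 * D0 + p1 * D1 + p2 * D2) ^ 2
  = (p0 - p1) * (p0 - p2) * D0 ^ 2 + (p1 - p0) * (p1 - p2) * D1 ^ 2
    + (p2 - p0) * (p2 - p1) * D2 ^ 2.
Proof. intros H. replace D2 with (- D0 - D1) by lra. ring. Qed.

Lemma cell_Fmap_image k idx n w :
  (fun x => exists y, cell k idx w y /\ x = Fmap k idx n y) = cell k idx (n :: w).
Proof.
  apply functional_extensionality. intros x. apply propositional_extensionality. split.
  - intros [y [[z [Hz ->]] ->]]. exists z. split; [exact Hz | reflexivity].
  - intros [z [Hz ->]]. exists (Fw k idx w z). split; [exists z; auto | reflexivity].
Qed.

Section CellRecursion.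
Variables (k : nat) (idx : nat -> nat * nat) (r : R).
Variables (h : nat -> pt -> R) (nu : nat -> (pt -> Prop) -> R).
Hypothesis hr : renorm k idx r.
Hypothesis hharm : forall i, (i < 3)%nat -> harmonic k idx r (h i).
Hypothesis hbd : forall i j, (i < 3)%nat -> (j < 3)%nat ->
  h i (q j) = if Nat.eqb i j then 1 else 0.
Hypothesis hcell : forall i w, (i < 3)%nat -> word_ok k w ->
  Un_cv (fun m => Em k idx r (fun x => h i (Fw k idx w x)) m)
        (r ^ length w * nu i (cell k idx w)).

Lemma nu_cell i w :
  (i < 3)%nat -> word_ok k w -> nu i (cell k idx w) = cell_energy k idx (h i) w / r ^ length w.
Proof.
  intros Hi Hw.
  assert (Hrw : 0 < r ^ length w) by apply pow_lt, (r_pos k idx r hr).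
  pose proof (hcell i w Hi Hw) as E.
  apply (Un_cv_const_eq _ (cell_energy k idx (h i) w)) in E.
  - rewrite <- E. field. lra.
  - intros m. rewrite (harmonic_Fw k idx r hr (h i) w (hharm i Hi) Hw m), Em_0. reflexivity.
Qed.

Lemma edge_diff_sum w a b :
  word_ok k w -> (a < 3)%nat -> (b < 3)%nat ->
  edge_diff k idx (h 0%nat) w a b + edge_diff k idx (h 1%nat) w a b
  + edge_diff k idx (h 2%nat) w a b = 0.
Proof.
  intros Hw Ha Hb.
  assert (E : edge_diff k idx (fun _ => 1) w a b
              = 1 * edge_diff k idx (h 0%nat) w a b + 1 * edge_diff k idx (h 1%nat) w a b
                + 1 * edge_diff k idx (h 2%nat) w a b).
  { apply (edge_diff_harmonic_combination k idx r hr); auto using harmonic_const.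
    intros l Hl. rewrite !hbd by lia. destruct l as [|[|[|]]]; simpl; lia || ring. }
  unfold edge_diff at 1 in E. lra.
Qed.

Lemma edge_diff_Fmap j n w a b :
  (j < 3)%nat -> (n < dnum k)%nat -> word_ok k w -> (a < 3)%nat -> (b < 3)%nat ->
  edge_diff k idx (h j) (n :: w) a b
  = pp k idx h j n 0 * edge_diff k idx (h 0%nat) w a b
    + pp k idx h j n 1 * edge_diff k idx (h 1%nat) w a b
    + pp k idx h j n 2 * edge_diff k idx (h 2%nat) w a b.
Proof.
  intros Hj Hn Hw Ha Hb.
  apply (edge_diff_harmonic_combination k idx r hr (fun x => h j (Fmap k idx n x)));
    auto using harmonic_Fmap.
  intros l Hl. rewrite !hbd by lia. unfold pp.
  destruct l as [|[|[|]]]; simpl; lia || ring.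
Qed.

Lemma nu_cell_Fmap n w j :
  (n < dnum k)%nat -> word_ok k w -> (j < 3)%nat ->
  nu j (fun x => exists y, cell k idx w y /\ x = Fmap k idx n y)
  = sumR 3 (fun i => mu k idx r h n j i * nu i (cell k idx w)).
Proof.
  intros Hn Hw Hj.
  assert (Hrw : 0 < r ^ length w) by apply pow_lt, (r_pos k idx r hr).
  rewrite cell_Fmap_image, sumR_3, !nu_cell by (assumption || lia || (constructor; assumption)).
  rewrite !cell_energy_edges, !edge_diff_Fmap by (auto; lia).
  rewrite (square_combination_identity _ _ _ _ _ _ (edge_diff_sum w 0 1 Hw ltac:(lia) ltac:(lia))),
    (square_combination_identity _ _ _ _ _ _ (edge_diff_sum w 0 2 Hw ltac:(lia) ltac:(lia))),
    (square_combination_identity _ _ _ _ _ _ (edge_diff_sum w 1 2 Hw ltac:(lia) ltac:(lia))).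
  unfold mu. simpl length. simpl pow. field.
  pose proof (r_pos k idx r hr). split; lra.
Qed.

End CellRecursion.

Lemma set_eq (A B : pt -> Prop) : (forall x, A x <-> B x) -> A = B.
Proof.
  intros H. apply functional_extensionality. intros x. apply propositional_extensionality. auto.
Qed.

Lemma dist2_coord_le x y :
  Rabs (fst x - fst y) <= dist2 x y /\ Rabs (snd x - snd y) <= dist2 x y.
Proof.
  unfold dist2. rewrite <- !sqrt_Rsqr_abs. unfold Rsqr.
  pose proof (pow2_ge_0 (fst x - fst y)). pose proof (pow2_ge_0 (snd x - snd y)).
  split; apply sqrt_le_1_alt; nra.
Qed.

Lemma dist2_le_of_coord x y a :
  Rabs (fst x - fst y) <= a -> Rabs (snd x - snd y) <= a -> dist2 x y <= 2 * a.
Proof.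
  intros H1 H2. pose proof (Rabs_pos (fst x - fst y)). pose proof (Rabs_pos (snd x - snd y)).
  unfold dist2. rewrite <- (sqrt_Rsqr (2 * a)) by lra. apply sqrt_le_1_alt.
  rewrite <- (pow2_abs (fst x - fst y)), <- (pow2_abs (snd x - snd y)). unfold Rsqr. nra.
Qed.

Lemma dist2_affine c o x y :
  dist2 (padd (pscale c x) o) (padd (pscale c y) o) = Rabs c * dist2 x y.
Proof.
  unfold dist2, padd, pscale; cbn [fst snd].
  replace ((c * fst x + fst o - (c * fst y + fst o)) ^ 2 + (c * snd x + snd o - (c * snd y + snd o)) ^ 2)
    with (Rsqr c * ((fst x - fst y) ^ 2 + (snd x - snd y) ^ 2)) by (unfold Rsqr; ring).
  rewrite sqrt_mult, sqrt_Rsqr_abs; [reflexivity | apply Rle_0_sqr |].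
  pose proof (pow2_ge_0 (fst x - fst y)). pose proof (pow2_ge_0 (snd x - snd y)). lra.
Qed.

Definition continuous_map (f : pt -> pt) : Prop :=
  forall x e, 0 < e -> exists delta, 0 < delta /\
    forall y, dist2 x y < delta -> dist2 (f x) (f y) < e.

Lemma continuous_affine c o : continuous_map (fun x => padd (pscale c x) o).
Proof.
  intros x e He. pose proof (Rabs_pos c).
  exists (e / (Rabs c + 1)). split; [apply Rdiv_lt_0_compat; lra|].
  intros y Hy. rewrite dist2_affine.
  apply Rle_lt_trans with ((Rabs c + 1) * dist2 x y).
  - assert (0 <= dist2 x y) by apply sqrt_pos. nra.
  - apply Rmult_lt_reg_r with (/ (Rabs c + 1)); [apply Rinv_0_lt_compat; lra|].
    replace ((Rabs c + 1) * dist2 x y * / (Rabs c + 1)) with (dist2 x y) by (field; lra).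
    exact Hy.
Qed.

Lemma open_halfplane a b c : is_open (fun x => a * fst x + b * snd x + c < 0).
Proof.
  intros x Hx. cbv beta in Hx. pose proof (Rabs_pos a). pose proof (Rabs_pos b).
  set (v := a * fst x + b * snd x + c) in Hx |- *.
  exists (- v / (Rabs a + Rabs b + 1)). split; [apply Rdiv_lt_0_compat; lra|].
  intros y Hy. destruct (dist2_coord_le x y) as [H1 H2].
  assert (Hd : (Rabs a + Rabs b + 1) * dist2 x y < - v).
  { apply Rmult_lt_reg_r with (/ (Rabs a + Rabs b + 1)); [apply Rinv_0_lt_compat; lra|].
    replace ((Rabs a + Rabs b + 1) * dist2 x y * / (Rabs a + Rabs b + 1)) with (dist2 x y)
      by (field; lra). exact Hy. }
  assert (E : Rabs (a * (fst y - fst x) + b * (snd y - snd x)) <= (Rabs a + Rabs b) * dist2 x y).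
  { eapply Rle_trans; [apply Rabs_triang|]. rewrite !Rabs_mult.
    rewrite (Rabs_minus_sym (fst y)), (Rabs_minus_sym (snd y)).
    pose proof (Rabs_pos (fst x - fst y)). pose proof (Rabs_pos (snd x - snd y)). nra. }
  pose proof (Rle_abs (a * (fst y - fst x) + b * (snd y - snd x))).
  pose proof (Rabs_pos (fst x - fst y)). unfold v in *. nra.
Qed.

Lemma borel_ext A B : (forall x, A x <-> B x) -> borel A -> borel B.
Proof. intros H HA. replace B with A by (apply set_eq; exact H). exact HA. Qed.

Lemma borel_full : borel (fun _ => True).
Proof. apply borel_open. intros x _. exists 1. split; auto; lra. Qed.

Lemma borel_empty : borel (fun _ => False).
Proof. apply (borel_ext (fun x => ~ True)); [tauto|]. apply borel_compl, borel_full. Qed.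

Lemma borel_union A B : borel A -> borel B -> borel (fun x => A x \/ B x).
Proof.
  intros HA HB. apply (borel_ext (fun x => exists n, (match n with O => A | _ => B end) x)).
  - intros x; split.
    + intros [[|n] H]; auto.
    + intros [H|H]; [exists 0%nat | exists 1%nat]; exact H.
  - apply borel_cunion. intros [|n]; assumption.
Qed.

Lemma borel_inter A B : borel A -> borel B -> borel (fun x => A x /\ B x).
Proof.
  intros HA HB. apply (borel_ext (fun x => ~ (~ A x \/ ~ B x))); [intros; tauto|].
  apply borel_compl, borel_union; apply borel_compl; assumption.
Qed.

Lemma borel_cinter (A : nat -> pt -> Prop) :
  (forall n, borel (A n)) -> borel (fun x => forall n, A n x).
Proof.
  intros H. apply (borel_ext (fun x => ~ exists n, ~ A n x)).
  - intros x. split.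
    + intros H1 n. apply NNPP. intros H2. apply H1. exists n. exact H2.
    + intros H1 [n Hn]. exact (Hn (H1 n)).
  - apply borel_compl, borel_cunion. intros. apply borel_compl, H.
Qed.

Lemma borel_finite_union {T} (A : T -> pt -> Prop) L :
  (forall t, In t L -> borel (A t)) -> borel (fun x => exists t, In t L /\ A t x).
Proof.
  induction L as [|a L IH]; intros H.
  - apply (borel_ext (fun _ => False)); [firstorder | apply borel_empty].
  - apply (borel_ext (fun x => A a x \/ exists t, In t L /\ A t x)).
    + intros x; split.
      * intros [H1|[t [H1 H2]]]; [exists a | exists t]; simpl; auto.
      * intros [t [[<-|H1] H2]]; [left | right; exists t]; auto.
    + apply borel_union; [apply H; left; reflexivity|].
      apply IH. intros t Ht. apply H. right. exact Ht.
Qed.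

Lemma borel_lt_union (X : nat -> pt -> Prop) N :
  (forall l, (l < N)%nat -> borel (X l)) -> borel (fun x => exists l, (l < N)%nat /\ X l x).
Proof.
  intros H. apply (borel_ext (fun x => exists l, In l (seq 0 N) /\ X l x)).
  - intros x. split; intros [l [Hl Hx]]; exists l; (split; [|exact Hx]).
    + apply in_seq in Hl. lia.
    + apply in_seq. lia.
  - apply borel_finite_union. intros l Hl. apply in_seq in Hl. apply H. lia.
Qed.

Lemma borel_preimage f A : continuous_map f -> borel A -> borel (fun x => A (f x)).
Proof.
  intros Hf HA. induction HA as [U HU|A HA IH|A HA IH].
  - apply borel_open. intros x Hx. destruct (HU (f x) Hx) as [e [He HUe]].
    destruct (Hf x e He) as [delta [Hdelta Hy]]. exists delta. split; auto.
  - apply borel_compl. exact IH.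
  - apply borel_cunion. exact IH.
Qed.

Lemma borel_closed_halfplane a b c : borel (fun x => 0 <= a * fst x + b * snd x + c).
Proof.
  apply (borel_ext (fun x => ~ (a * fst x + b * snd x + c < 0))).
  - intros x. split; intros H; [apply Rnot_lt_le in H | apply Rle_not_lt]; exact H.
  - apply borel_compl, borel_open, open_halfplane.
Qed.

Lemma in_T_iff x :
  in_T x <-> 0 <= snd x /\ 0 <= sqrt 3 * fst x - snd x /\ 0 <= sqrt 3 - sqrt 3 * fst x - snd x.
Proof.
  assert (H3 : sqrt 3 * sqrt 3 = 3) by (apply sqrt_sqrt; lra).
  assert (H3p : 0 < sqrt 3) by (apply sqrt_lt_R0; lra).
  split.
  - intros [s [t [Hs [Ht [Hst ->]]]]]. unfold padd, pscale, q; simpl. nra.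
  - destruct x as [x y]; simpl. intros [H1 [H2 H4]].
    exists ((sqrt 3 * x - y) / sqrt 3), (2 * y / sqrt 3).
    assert (Hinv : 0 < / sqrt 3) by (apply Rinv_0_lt_compat; lra).
    repeat split.
    + unfold Rdiv. apply Rmult_le_pos; lra.
    + unfold Rdiv. apply Rmult_le_pos; lra.
    + apply Rmult_le_reg_l with (sqrt 3); [lra|]. field_simplify; lra.
    + unfold padd, pscale, q; simpl. f_equal; field; lra.
Qed.

Lemma borel_T : borel in_T.
Proof.
  apply (borel_ext (fun x => 0 <= 0 * fst x + 1 * snd x + 0 /\
           (0 <= sqrt 3 * fst x + (-1) * snd x + 0 /\ 0 <= (- sqrt 3) * fst x + (-1) * snd x + sqrt 3))).
  - intros x. rewrite in_T_iff. split; intros H; repeat split; lra.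
  - repeat apply borel_inter; apply borel_closed_halfplane.
Qed.

Lemma in_T_dist x y : in_T x -> in_T y -> dist2 x y <= 2.
Proof.
  assert (H3 : sqrt 3 < 2).
  { rewrite <- (sqrt_Rsqr 2) by lra. apply sqrt_lt_1_alt. unfold Rsqr. lra. }
  intros [s [t [Hs [Ht [Hst ->]]]]] [s' [t' [Hs' [Ht' [Hst' ->]]]]].
  pose proof (sqrt_pos 3).
  replace 2 with (2 * 1) by ring. apply dist2_le_of_coord; unfold padd, pscale, q; simpl;
    apply Rabs_le; split; nra.
Qed.

Lemma finite_uniform_bound (Q : nat -> nat -> Prop) N :
  (forall a M M', (M <= M')%nat -> Q a M -> Q a M') ->
  (forall a, (a < N)%nat -> exists M, Q a M) -> exists M, forall a, (a < N)%nat -> Q a M.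
Proof.
  intros Hup. induction N as [|N IH]; intros H; [exists 0%nat; intros; lia|].
  destruct IH as [M1 HM1]; [intros; apply H; lia|].
  destruct (H N) as [M2 HM2]; [lia|].
  exists (Nat.max M1 M2). intros a Ha. destruct (Nat.eq_dec a N) as [->|Hne].
  - apply (Hup _ M2); [lia | exact HM2].
  - apply (Hup _ M1); [lia | apply HM1; lia].
Qed.

Lemma Fw_cons k idx n w x : Fw k idx (n :: w) x = Fmap k idx n (Fw k idx w x).
Proof. reflexivity. Qed.

Lemma Fw_app k idx u v x : Fw k idx (u ++ v) x = Fw k idx u (Fw k idx v x).
Proof. apply fold_right_app. Qed.

Section SelfSimilarSet.
Variables (k : nat) (idx : nat -> nat * nat).
Hypothesis hk : (2 <= k)%nat.
Hypothesis hidx : valid_enum k idx.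

Lemma INR_k_ge2 : 2 <= INR k.
Proof. apply (le_INR 2). exact hk. Qed.

Definition Fmap_inv (n : nat) (z : pt) : pt :=
  padd (pscale (INR k) z)
       (pscale (-1) (padd (pscale (INR (fst (idx n))) (q 1)) (pscale (INR (snd (idx n))) (q 2)))).

Lemma Fmap_inv_l n x : Fmap_inv n (Fmap k idx n x) = x.
Proof.
  pose proof INR_k_ge2. destruct x as [x1 x2].
  unfold Fmap_inv, Fmap, padd, pscale; simpl. f_equal; field; lra.
Qed.

Lemma Fmap_inv_r n z : Fmap k idx n (Fmap_inv n z) = z.
Proof.
  pose proof INR_k_ge2. destruct z as [z1 z2].
  unfold Fmap_inv, Fmap, padd, pscale; simpl. f_equal; field; lra.
Qed.

Lemma Fmap_inj n x y : Fmap k idx n x = Fmap k idx n y -> x = y.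
Proof. intros H. rewrite <- (Fmap_inv_l n x), <- (Fmap_inv_l n y), H. reflexivity. Qed.

Lemma dist2_Fmap n x y : dist2 (Fmap k idx n x) (Fmap k idx n y) = / INR k * dist2 x y.
Proof.
  pose proof INR_k_ge2. unfold Fmap. rewrite dist2_affine, Rabs_pos_eq; [reflexivity|].
  left. apply Rinv_0_lt_compat. lra.
Qed.

Lemma dist2_Fw w x y : dist2 (Fw k idx w x) (Fw k idx w y) = (/ INR k) ^ length w * dist2 x y.
Proof.
  induction w as [|n w IH]; simpl length.
  - simpl. ring.
  - rewrite !Fw_cons, dist2_Fmap, IH. simpl. ring.
Qed.

Lemma continuous_Fmap n : continuous_map (Fmap k idx n).
Proof. apply continuous_affine. Qed.

Lemma borel_image_Fmap n B : borel B -> borel (fun x => exists y, B y /\ x = Fmap k idx n y).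
Proof.
  intros HB. apply (borel_ext (fun x => B (Fmap_inv n x))).
  - intros x. split.
    + intros H. exists (Fmap_inv n x). rewrite Fmap_inv_r. auto.
    + intros [y [Hy ->]]. rewrite Fmap_inv_l. exact Hy.
  - apply borel_preimage; [apply continuous_affine | exact HB].
Qed.

Lemma borel_image_Fw w B : borel B -> borel (fun x => exists y, B y /\ x = Fw k idx w y).
Proof.
  intros HB. induction w as [|n w IH].
  - apply (borel_ext B); [|exact HB]. intros x. split.
    + intros Hx. exists x. auto.
    + intros [y [Hy ->]]. exact Hy.
  - apply (borel_ext (fun x => exists z, (exists y, B y /\ z = Fw k idx w y) /\ x = Fmap k idx n z)).
    + intros x. split.
      * intros [z [[y [Hy ->]] ->]]. exists y. auto.
      * intros [y [Hy ->]]. exists (Fw k idx w y). eauto.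
    + apply borel_image_Fmap. exact IH.
Qed.

Lemma in_T_Fmap n y : (n < dnum k)%nat -> in_T y -> in_T (Fmap k idx n y).
Proof.
  intros Hn [s [t [Hs [Ht [Hst ->]]]]]. pose proof INR_k_ge2.
  assert (Hab : INR (fst (idx n)) + INR (snd (idx n)) + 1 <= INR k).
  { rewrite <- plus_INR, <- S_INR. apply le_INR. pose proof (proj1 hidx n Hn). lia. }
  pose proof (pos_INR (fst (idx n))). pose proof (pos_INR (snd (idx n))).
  assert (Hinv : 0 < / INR k) by (apply Rinv_0_lt_compat; lra).
  exists ((s + INR (fst (idx n))) / INR k), ((t + INR (snd (idx n))) / INR k).
  repeat split.
  - unfold Rdiv. apply Rmult_le_pos; lra.
  - unfold Rdiv. apply Rmult_le_pos; lra.
  - unfold Rdiv. rewrite <- Rmult_plus_distr_r.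
    apply Rmult_le_reg_r with (INR k); [lra|].
    rewrite Rmult_assoc, Rinv_l, Rmult_1_r; lra.
  - unfold Fmap, padd, pscale; simpl. f_equal; field; lra.
Qed.

Lemma in_T_Fw w y : word_ok k w -> in_T y -> in_T (Fw k idx w y).
Proof.
  induction w as [|n w IH]; intros Hw Hy; [exact Hy|].
  inversion Hw; subst. apply in_T_Fmap; auto.
Qed.

Lemma in_K_T x : in_K k idx x -> in_T x.
Proof.
  intros H. destruct (H 0%nat) as [[|n w] [_ [Hl [y [Hy ->]]]]]; [exact Hy | discriminate].
Qed.

Lemma in_K_Fmap n y : (n < dnum k)%nat -> in_K k idx y -> in_K k idx (Fmap k idx n y).
Proof.
  intros Hn Hy [|m].
  - exists nil. repeat split; [constructor|]. exists (Fmap k idx n y).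
    split; [apply in_T_Fmap; auto; apply in_K_T; exact Hy | reflexivity].
  - destruct (Hy m) as [w [Hw [Hl [z [Hz ->]]]]].
    exists (n :: w). repeat split; [constructor; auto | simpl; lia |]. exists z. auto.
Qed.

Lemma in_K_Fw w y : word_ok k w -> in_K k idx y -> in_K k idx (Fw k idx w y).
Proof.
  induction w as [|n w IH]; intros Hw Hy; [exact Hy|].
  inversion Hw; subst. apply in_K_Fmap; auto.
Qed.

Lemma cell_in_K w x : word_ok k w -> cell k idx w x -> in_K k idx x.
Proof. intros Hw [y [Hy ->]]. apply in_K_Fw; auto. Qed.

Lemma cell_nil : cell k idx nil = in_K k idx.
Proof.
  apply set_eq. intros x. split.
  - intros [y [Hy ->]]. exact Hy.
  - intros Hx. exists x. auto.
Qed.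

(* The first letter is chosen by a pigeonhole argument over the approximations of x of all
   levels. *)
Lemma in_K_Fmap_cover x :
  in_K k idx x -> exists n, (n < dnum k)%nat /\ exists y, in_K k idx y /\ x = Fmap k idx n y.
Proof.
  intros Hx.
  set (reach := fun a m => exists w, word_ok k w /\ length w = m /\
                  exists y, in_T y /\ x = Fmap k idx a (Fw k idx w y)).
  assert (Hdown : forall a m m', (m <= m')%nat -> reach a m' -> reach a m).
  { intros a m m' Hm [w [Hw [Hl [y [Hy Hxy]]]]].
    rewrite <- (firstn_skipn m w) in Hw, Hxy. apply Forall_app in Hw as [Hw1 Hw2].
    exists (firstn m w). split; [exact Hw1|]. split; [rewrite length_firstn; lia|].
    exists (Fw k idx (skipn m w) y). split; [apply in_T_Fw; auto|].
    rewrite Hxy, Fw_app. reflexivity. }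
  assert (Hall : exists a, (a < dnum k)%nat /\ forall m, reach a m).
  { apply NNPP. intros Hno.
    destruct (finite_uniform_bound (fun a M => ~ reach a M) (dnum k)) as [M HM].
    - intros a M M' HM' HnM HM'r. exact (HnM (Hdown a M M' HM' HM'r)).
    - intros a Ha. apply NNPP. intros Hn. apply Hno. exists a. split; [exact Ha|].
      intros m. apply NNPP. intros Hm. apply Hn. exists m. exact Hm.
    - destruct (Hx (S M)) as [[|a w] [Hw [Hl [y [Hy Hxy]]]]]; [discriminate|].
      inversion Hw as [|a' w' Ha Hw']; subst.
      apply (HM a Ha). exists w. repeat split; auto. exists y. auto. }
  destruct Hall as [a [Ha Hreach]]. exists a. split; [exact Ha|].
  exists (Fmap_inv a x). split; [|symmetry; apply Fmap_inv_r].
  intros m. destruct (Hreach m) as [w [Hw [Hl [y [Hy Hxy]]]]].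
  exists w. repeat split; auto. exists y. split; [exact Hy|]. rewrite Hxy, Fmap_inv_l. reflexivity.
Qed.

Lemma in_K_cells x : in_K k idx x -> forall m, exists w, In w (words (dnum k) m) /\ cell k idx w x.
Proof.
  intros Hx m. revert x Hx. induction m as [|m IH]; intros x Hx.
  - exists nil. split; [left; reflexivity | rewrite cell_nil; exact Hx].
  - destruct (in_K_Fmap_cover x Hx) as [n [Hn [y [Hy ->]]]].
    destruct (IH y Hy) as [w [Hw [z [Hz ->]]]].
    apply In_words in Hw as [Hw Hl].
    exists (n :: w). split.
    + apply In_words. split; [constructor; auto | simpl; lia].
    + exists z. auto.
Qed.

Lemma borel_K : borel (in_K k idx).
Proof.
  apply (borel_ext (fun x => forall m, exists w, In w (words (dnum k) m) /\
                               exists y, in_T y /\ x = Fw k idx w y)).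
  - intros x. split; intros H m; destruct (H m) as [w [H1 H2]]; exists w.
    + apply In_words in H1. tauto.
    + split; [apply In_words; tauto | tauto].
  - apply borel_cinter. intros m. apply (borel_finite_union (fun w x => exists y, in_T y /\ x = Fw k idx w y)).
    intros w _. apply borel_image_Fw, borel_T.
Qed.

Lemma borel_cell w : borel (cell k idx w).
Proof. apply borel_image_Fw, borel_K. Qed.

Lemma cell_dist w x y :
  cell k idx w x -> cell k idx w y -> dist2 x y <= 2 * (/ INR k) ^ length w.
Proof.
  intros [a [Ha ->]] [b [Hb ->]]. rewrite dist2_Fw.
  pose proof (in_T_dist a b (in_K_T a Ha) (in_K_T b Hb)). pose proof INR_k_ge2.
  assert (0 <= (/ INR k) ^ length w) by (apply pow_le; left; apply Rinv_0_lt_compat; lra).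
  nra.
Qed.

Lemma open_cell_nbhd U x : is_open U -> U x -> in_K k idx x ->
  exists m w, In w (words (dnum k) m) /\ cell k idx w x /\ forall y, cell k idx w y -> U y.
Proof.
  intros HU Ux Kx. destruct (HU x Ux) as [e [He Hball]]. pose proof INR_k_ge2.
  assert (Hk1 : 0 < / INR k < 1).
  { split; [apply Rinv_0_lt_compat; lra|]. rewrite <- Rinv_1. apply Rinv_lt_contravar; lra. }
  destruct (pow_lt_1_zero (/ INR k) ltac:(rewrite Rabs_pos_eq; lra) (e / 2) ltac:(lra)) as [m Hm].
  destruct (in_K_cells x Kx m) as [w [Hw Hxw]].
  exists m, w. split; [exact Hw|]. split; [exact Hxw|].
  intros y Hy. apply Hball. pose proof (cell_dist w x y Hxw Hy) as Hd.
  apply In_words in Hw as [_ Hl]. rewrite Hl in Hd. specialize (Hm m (le_n m)).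
  rewrite Rabs_pos_eq in Hm by (apply pow_le; lra). lra.
Qed.

End SelfSimilarSet.

Definition borel_in (K0 A : pt -> Prop) : Prop := borel A /\ forall x, A x -> K0 x.

Section FiniteMeasure.
Variables (K0 : pt -> Prop) (nu : (pt -> Prop) -> R).
Hypothesis hnu : borel_measure_on K0 nu.

Lemma borel_in_inter A B : borel_in K0 A -> borel B -> borel_in K0 (fun x => A x /\ B x).
Proof. intros [HA HAK] HB. split; [apply borel_inter; auto | intros x [Hx _]; auto]. Qed.

Lemma borel_in_diff A B : borel_in K0 A -> borel B -> borel_in K0 (fun x => A x /\ ~ B x).
Proof. intros HA HB. apply borel_in_inter; [exact HA | apply borel_compl, HB]. Qed.

Lemma nu_ge0 A : borel_in K0 A -> 0 <= nu A.
Proof. intros [HA HAK]. apply (proj1 (proj2 hnu)); assumption. Qed.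

Lemma nu_union_disj A B :
  borel_in K0 A -> borel_in K0 B -> (forall x, A x -> B x -> False) ->
  nu (fun x => A x \/ B x) = nu A + nu B.
Proof.
  intros HA HB Hd. destruct hnu as [H0 [_ Hs]].
  set (S := fun n => match n with O => A | 1%nat => B | _ => fun _ => False end).
  replace (fun x => A x \/ B x) with (fun x => exists n, S n x).
  2:{ apply set_eq. intros x. split.
      - intros [[|[|n]] H]; simpl in H; auto; contradiction.
      - intros [H|H]; [exists 0%nat | exists 1%nat]; exact H. }
  apply (uniqueness_sum (fun n => nu (S n))).
  - apply Hs.
    + intros [|[|n]]; simpl; auto. split; [apply borel_empty | tauto].
    + intros [|[|n]] [|[|m]] x Hnm; simpl; try tauto; try lia; eauto.
  - intros e He. exists 1%nat. intros n Hn.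
    replace (sum_f_R0 (fun n => nu (S n)) n) with (nu A + nu B).
    + unfold Rdist. rewrite Rminus_diag, Rabs_R0. exact He.
    + induction n as [|[|n] IH]; [lia | reflexivity |].
      rewrite tech5, <- IH by lia. simpl. rewrite H0. ring.
Qed.

Lemma nu_split A B : borel_in K0 A -> borel B ->
  nu A = nu (fun x => A x /\ B x) + nu (fun x => A x /\ ~ B x).
Proof.
  intros HA HB. rewrite <- nu_union_disj.
  - f_equal. apply set_eq. intros x. destruct (classic (B x)); tauto.
  - apply borel_in_inter; assumption.
  - apply borel_in_diff; assumption.
  - tauto.
Qed.

Lemma nu_mono A B : borel_in K0 A -> borel_in K0 B -> (forall x, A x -> B x) -> nu A <= nu B.
Proof.
  intros HA HB Hs. rewrite (nu_split B A HB (proj1 HA)).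
  replace (fun x => B x /\ A x) with A by (apply set_eq; intros x; split; auto; tauto).
  pose proof (nu_ge0 _ (borel_in_diff B A HB (proj1 HA))). lra.
Qed.

Lemma nu_diff A B : borel_in K0 A -> borel_in K0 B -> (forall x, B x -> A x) ->
  nu (fun x => A x /\ ~ B x) = nu A - nu B.
Proof.
  intros HA HB Hs. rewrite (nu_split A B HA (proj1 HB)).
  replace (fun x => A x /\ B x) with B by (apply set_eq; intros x; split; auto; tauto). ring.
Qed.

Lemma nu_union A B : borel_in K0 A -> borel_in K0 B ->
  nu (fun x => A x \/ B x) = nu A + nu B - nu (fun x => B x /\ A x).
Proof.
  intros HA HB.
  assert (E : nu (fun x => A x \/ B x) = nu A + nu (fun x => B x /\ ~ A x)).
  { rewrite <- nu_union_disj.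
    - f_equal. apply set_eq. intros x. destruct (classic (A x)); tauto.
    - exact HA.
    - apply borel_in_diff; [exact HB | apply HA].
    - tauto. }
  rewrite E, (nu_split B A HB (proj1 HA)). ring.
Qed.

Lemma nu_finite_union (X : nat -> pt -> Prop) N :
  (forall l, (l < N)%nat -> borel_in K0 (X l)) ->
  nu (fun x => exists l, (l < N)%nat /\ X l x)
  = sumR N (fun l => nu (X l))
    - sumR N (fun l => nu (fun x => X l x /\ exists l', (l' < l)%nat /\ X l' x)).
Proof.
  intros HX. induction N as [|N IH].
  - unfold sumR; simpl. rewrite Rminus_0_r, <- (proj1 hnu). f_equal.
    apply set_eq. intros x. split; [intros [l [Hl _]]; lia | tauto].
  - rewrite !sumR_S.
    replace (fun x => exists l, (l < S N)%nat /\ X l x)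
      with (fun x => (exists l, (l < N)%nat /\ X l x) \/ X N x).
    + rewrite nu_union, IH; [ring | intros; apply HX; lia | | apply HX; lia].
      split; [apply borel_lt_union; intros; apply HX; lia|].
      intros x [l [Hl H]]. apply (proj2 (HX l ltac:(lia))). exact H.
    + apply set_eq. intros x. split.
      * intros [[l [Hl H1]]|H1]; [exists l | exists N]; split; auto; lia.
      * intros [l [Hl H1]]. destruct (Nat.eq_dec l N) as [->|Hne]; [right; exact H1|].
        left. exists l. split; [lia | exact H1].
Qed.

End FiniteMeasure.

Lemma cell_cons_Fmap k idx n w y : cell k idx w y -> cell k idx (n :: w) (Fmap k idx n y).
Proof. intros [z [Hz ->]]. exists z. auto. Qed.

Section CellOverlaps.
Variables (k : nat) (idx : nat -> nat * nat) (r : R).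
Variables (h : nat -> pt -> R) (nu : nat -> (pt -> Prop) -> R).
Hypothesis hk : (2 <= k)%nat.
Hypothesis hidx : valid_enum k idx.
Hypothesis hr : renorm k idx r.
Hypothesis hharm : forall i, (i < 3)%nat -> harmonic k idx r (h i).
Hypothesis hnu : forall i, (i < 3)%nat -> borel_measure_on (in_K k idx) (nu i).
Hypothesis hcell : forall i w, (i < 3)%nat -> word_ok k w ->
  Un_cv (fun m => Em k idx r (fun x => h i (Fw k idx w x)) m)
        (r ^ length w * nu i (cell k idx w)).

Lemma word_ok_snoc u l : word_ok k u -> (l < dnum k)%nat -> word_ok k (u ++ l :: nil).
Proof. intros Hu Hl. apply Forall_app. split; [exact Hu | constructor; auto]. Qed.

Lemma cell_app_prefix u v x : word_ok k v -> cell k idx (u ++ v) x -> cell k idx u x.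
Proof.
  intros Hv [y [Hy ->]]. exists (Fw k idx v y). split.
  - apply in_K_Fw; assumption.
  - apply Fw_app.
Qed.

Lemma borel_in_cell w : word_ok k w -> borel_in (in_K k idx) (cell k idx w).
Proof. intros Hw. split; [apply borel_cell, hk | intros x Hx; apply (cell_in_K k idx hk hidx w); assumption]. Qed.

Lemma cell_children u x : word_ok k u ->
  cell k idx u x <-> exists l, (l < dnum k)%nat /\ cell k idx (u ++ l :: nil) x.
Proof.
  intros Hu. split.
  - intros [y [Hy ->]]. destruct (in_K_Fmap_cover k idx hk hidx y Hy) as [l [Hl [z [Hz ->]]]].
    exists l. split; [exact Hl|]. exists z. split; [exact Hz|]. rewrite Fw_app. reflexivity.
  - intros [l [Hl Hx]]. apply (cell_app_prefix _ _ _ (word_ok_snoc nil l (Forall_nil _) Hl) Hx).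
Qed.

(* Additivity of nu_i over children is the self-similarity of the energy of the harmonic
   function h_i restricted to the cell. *)
Lemma nu_cell_children i u : (i < 3)%nat -> word_ok k u ->
  sumR (dnum k) (fun l => nu i (cell k idx (u ++ l :: nil))) = nu i (cell k idx u).
Proof.
  intros Hi Hu.
  pose proof (r_pos k idx r hr) as Hr.
  assert (Hru : 0 < r ^ length u) by (apply pow_lt; exact Hr).
  assert (Hself : / r * sumR (dnum k)
                    (fun l => cell_energy k idx (fun x => h i (Fw k idx u x)) (l :: nil))
                  = cell_energy k idx (h i) u).
  { pose proof (harmonic_Fw k idx r hr (h i) u (hharm i Hi) Hu 1%nat) as E.
    rewrite Em_S, Em_0 in E. change (cell_energy k idx (h i) u)
      with (cell_energy k idx (fun x => h i (Fw k idx u x)) nil).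
    rewrite <- E. f_equal. rewrite !sumR_lsum.
    apply lsum_ext. intros l _. rewrite Em_0. reflexivity. }
  rewrite (nu_cell k idx r h nu hr hharm hcell i u Hi Hu), <- Hself, sumR_lsum.
  rewrite (lsum_ext _ (fun l => / r ^ S (length u)
                               * cell_energy k idx (fun x => h i (Fw k idx u x)) (l :: nil))).
  - rewrite lsum_scal, <- sumR_lsum. simpl pow. field. lra.
  - intros l Hl. apply in_seq in Hl.
    rewrite (nu_cell k idx r h nu hr hharm hcell) by (auto; apply word_ok_snoc; auto; lia).
    rewrite length_app, Nat.add_1_r. unfold Rdiv. rewrite Rmult_comm. f_equal.
    unfold cell_energy. rewrite !Fw_app. reflexivity.
Qed.

Definition overlap (u : list nat) (n : nat) (x : pt) : Prop :=
  cell k idx (u ++ n :: nil) x /\ exists l, (l < n)%nat /\ cell k idx (u ++ l :: nil) x.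

Lemma borel_in_overlap u n : word_ok k u -> (n < dnum k)%nat -> borel_in (in_K k idx) (overlap u n).
Proof.
  intros Hu Hn. apply borel_in_inter.
  - apply borel_in_cell, word_ok_snoc; assumption.
  - apply borel_lt_union. intros. apply borel_cell, hk.
Qed.

Lemma nu_overlap i u n : (i < 3)%nat -> word_ok k u -> (n < dnum k)%nat -> nu i (overlap u n) = 0.
Proof.
  intros Hi Hu Hn. pose proof (hnu i Hi) as Hm.
  pose proof (nu_finite_union _ _ Hm (fun l => cell k idx (u ++ l :: nil)) (dnum k)
                (fun l Hl => borel_in_cell _ (word_ok_snoc u l Hu Hl))) as E.
  cbv beta in E.
  replace (fun x => exists l, (l < dnum k)%nat /\ cell k idx (u ++ l :: nil) x)
    with (cell k idx u) in E by (apply set_eq; intros x; apply cell_children; exact Hu).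
  rewrite nu_cell_children in E by assumption.
  assert (Hsum : sumR (dnum k) (fun l => nu i (overlap u l)) = 0).
  { unfold overlap. lra. }
  rewrite sumR_lsum in Hsum. apply lsum_eq0_nonneg with (x := n) in Hsum.
  - exact Hsum.
  - intros l Hl. apply in_seq in Hl. apply (nu_ge0 _ _ Hm), borel_in_overlap; [exact Hu | lia].
  - apply in_seq. lia.
Qed.

End CellOverlaps.

Lemma exists_least_index (A : nat -> pt -> Prop) x n :
  A n x -> exists n', A n' x /\ forall m, (m < n')%nat -> ~ A m x.
Proof.
  induction n as [n IH] using (well_founded_induction Nat.lt_wf_0). intros Hn.
  destruct (classic (exists m, (m < n)%nat /\ A m x)) as [[m [Hm HAm]]|Hno].
  - exact (IH m Hm HAm).
  - exists n. split; [exact Hn|]. intros m Hm HAm. apply Hno. eauto.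
Qed.

Section Dynkin.
Variables (K0 : pt -> Prop) (P : (pt -> Prop) -> Prop).
Hypothesis HPK : forall A, P A -> forall x, A x -> K0 x.
Hypothesis Hpi : forall A B, P A -> P B -> P (fun x => A x /\ B x).

Inductive dynkin : (pt -> Prop) -> Prop :=
| dynkin_gen A : P A -> dynkin A
| dynkin_full : dynkin K0
| dynkin_compl A : dynkin A -> dynkin (fun x => K0 x /\ ~ A x)
| dynkin_disj_cunion (A : nat -> pt -> Prop) :
    (forall n, dynkin (A n)) -> (forall n m x, n <> m -> A n x -> A m x -> False) ->
    dynkin (fun x => exists n, A n x).

Lemma dynkin_sub A : dynkin A -> forall x, A x -> K0 x.
Proof.
  induction 1 as [A HA| |A _ _|A _ IH _]; intros x Hx.
  - exact (HPK A HA x Hx).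
  - exact Hx.
  - apply Hx.
  - destruct Hx as [n Hn]. exact (IH n x Hn).
Qed.

Lemma dynkin_ext A B : dynkin A -> (forall x, A x <-> B x) -> dynkin B.
Proof. intros HA H. replace B with A by (apply set_eq; exact H). exact HA. Qed.

Lemma dynkin_empty : dynkin (fun _ => False).
Proof. apply (dynkin_ext (fun x => K0 x /\ ~ K0 x)); [apply dynkin_compl, dynkin_full | tauto]. Qed.

Lemma dynkin_union_disj A B :
  dynkin A -> dynkin B -> (forall x, A x -> B x -> False) -> dynkin (fun x => A x \/ B x).
Proof.
  intros HA HB Hd.
  apply (dynkin_ext (fun x => exists n, (match n with O => A | 1%nat => B | _ => fun _ => False end) x)).
  - apply dynkin_disj_cunion.
    + intros [|[|n]]; [exact HA | exact HB | apply dynkin_empty].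
    + intros [|[|n]] [|[|m]] x Hnm; simpl; try tauto; try lia; eauto.
  - intros x. split.
    + intros [[|[|n]] H]; auto; contradiction.
    + intros [H|H]; [exists 0%nat | exists 1%nat]; exact H.
Qed.

Lemma dynkin_diff A B : dynkin A -> dynkin B -> (forall x, A x -> B x) ->
  dynkin (fun x => B x /\ ~ A x).
Proof.
  intros HA HB Hs.
  apply (dynkin_ext (fun x => K0 x /\ ~ (A x \/ (K0 x /\ ~ B x)))).
  - apply dynkin_compl, dynkin_union_disj; [exact HA | apply dynkin_compl, HB |].
    intros x H1 [_ H2]. exact (H2 (Hs x H1)).
  - intros x. pose proof (dynkin_sub B HB x). tauto.
Qed.

Lemma dynkin_inter_gen A B : P A -> dynkin B -> dynkin (fun x => A x /\ B x).
Proof.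
  intros HA HB. pose proof (HPK A HA) as HAK.
  induction HB as [B HB| |B HB IH|B HB IH Hdisj].
  - apply dynkin_gen, Hpi; assumption.
  - apply (dynkin_ext A); [apply dynkin_gen, HA |]. intros x. pose proof (HAK x). tauto.
  - apply (dynkin_ext (fun x => A x /\ ~ (A x /\ B x))).
    + apply dynkin_diff; [exact IH | apply dynkin_gen, HA | tauto].
    + intros x. pose proof (HAK x). tauto.
  - apply (dynkin_ext (fun x => exists n, A x /\ B n x)).
    + apply dynkin_disj_cunion; [exact IH|]. intros n m x Hnm [_ H1] [_ H2]. eauto.
    + intros x. split; [intros [n [H1 H2]] | intros [H1 [n H2]]]; eauto.
Qed.

Lemma dynkin_inter A B : dynkin A -> dynkin B -> dynkin (fun x => A x /\ B x).
Proof.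
  intros HA. revert B. induction HA as [A HA| |A HA IH|A HA IH Hdisj]; intros B HB.
  - apply dynkin_inter_gen; assumption.
  - apply (dynkin_ext B); [exact HB|]. intros x. pose proof (dynkin_sub B HB x). tauto.
  - apply (dynkin_ext (fun x => B x /\ ~ (A x /\ B x))).
    + apply dynkin_diff; [apply IH, HB | exact HB | tauto].
    + intros x. pose proof (dynkin_sub B HB x). tauto.
  - apply (dynkin_ext (fun x => exists n, A n x /\ B x)).
    + apply dynkin_disj_cunion; [intros n; apply IH, HB|]. intros n m x Hnm [H1 _] [H2 _]. eauto.
    + intros x. split; [intros [n [H1 H2]] | intros [[n H1] H2]]; eauto.
Qed.

Lemma dynkin_union A B : dynkin A -> dynkin B -> dynkin (fun x => A x \/ B x).
Proof.
  intros HA HB.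
  apply (dynkin_ext (fun x => K0 x /\ ~ ((K0 x /\ ~ A x) /\ (K0 x /\ ~ B x)))).
  - apply dynkin_compl, dynkin_inter; apply dynkin_compl; assumption.
  - intros x. pose proof (dynkin_sub A HA x). pose proof (dynkin_sub B HB x). tauto.
Qed.

(* Disjointify: keep from A n only the points lying in no earlier A m. *)
Lemma dynkin_cunion (A : nat -> pt -> Prop) :
  (forall n, dynkin (A n)) -> dynkin (fun x => exists n, A n x).
Proof.
  intros HA.
  assert (HU : forall n, dynkin (fun x => exists m, (m < n)%nat /\ A m x)).
  { induction n as [|n IH].
    - apply (dynkin_ext (fun _ => False)); [apply dynkin_empty|].
      intros x. split; [tauto | intros [m [Hm _]]; lia].
    - apply (dynkin_ext (fun x => (exists m, (m < n)%nat /\ A m x) \/ A n x)).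
      + apply dynkin_union; [exact IH | apply HA].
      + intros x. split.
        * intros [[m [Hm H1]]|H1]; [exists m | exists n]; split; auto; lia.
        * intros [m [Hm H1]]. destruct (Nat.eq_dec m n) as [->|Hne]; [right; exact H1|].
          left. exists m. split; [lia | exact H1]. }
  apply (dynkin_ext (fun x => exists n, A n x /\ (K0 x /\ ~ exists m, (m < n)%nat /\ A m x))).
  - apply dynkin_disj_cunion.
    + intros n. apply dynkin_inter; [apply HA | apply dynkin_compl, HU].
    + intros n m x Hnm [H1 [_ H2]] [H3 [_ H4]].
      destruct (Nat.lt_total n m) as [Hlt|[Heq|Hlt]]; [apply H4 | contradiction | apply H2]; eauto.
  - intros x. split.
    + intros [n [H1 _]]. eauto.
    + intros [n Hn]. destruct (exists_least_index A x n Hn) as [n' [H1 H2]].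
      exists n'. split; [exact H1|]. split; [exact (dynkin_sub _ (HA n') x H1)|].
      intros [m [Hm H3]]. exact (H2 m Hm H3).
Qed.

End Dynkin.

Lemma list_prefix_cases (w1 w2 : list nat) :
  (exists v, w2 = w1 ++ v) \/ (exists v, w1 = w2 ++ v) \/
  exists u a b v1 v2, a <> b /\ w1 = u ++ a :: v1 /\ w2 = u ++ b :: v2.
Proof.
  revert w2. induction w1 as [|a w1 IH]; intros [|b w2].
  - left. exists nil. reflexivity.
  - left. exists (b :: w2). reflexivity.
  - right; left. exists (a :: w1). reflexivity.
  - destruct (Nat.eq_dec a b) as [<-|Hab].
    + destruct (IH w2) as [[v ->]|[[v ->]|[u [a' [b' [v1 [v2 [Hne [-> ->]]]]]]]]].
      * left. exists v. reflexivity.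
      * right; left. exists v. reflexivity.
      * right; right. exists (a :: u), a', b', v1, v2. auto.
    + right; right. exists nil, a, b, w1, w2. auto.
Qed.

Lemma infinite_sum_ext a b l : (forall m, a m = b m) -> infinite_sum a l -> infinite_sum b l.
Proof.
  intros E H e He.
  assert (ES : forall n, sum_f_R0 a n = sum_f_R0 b n).
  { induction n as [|n IH]; simpl; rewrite E; [|rewrite IH]; reflexivity. }
  destruct (H e He) as [N HN]. exists N. intros n Hn. rewrite <- ES. exact (HN n Hn).
Qed.

Lemma infinite_sum_lin3 a0 a1 a2 l0 l1 l2 c0 c1 c2 :
  infinite_sum a0 l0 -> infinite_sum a1 l1 -> infinite_sum a2 l2 ->
  infinite_sum (fun m => c0 * a0 m + c1 * a1 m + c2 * a2 m) (c0 * l0 + c1 * l1 + c2 * l2).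
Proof.
  intros H0 H1 H2.
  assert (Hc : forall c, Un_cv (fun _ => c) c).
  { intros c e He. exists 0%nat. intros. unfold Rdist. rewrite Rminus_diag, Rabs_R0. exact He. }
  pose proof (CV_plus _ _ _ _ (CV_plus _ _ _ _ (CV_mult _ _ _ _ (Hc c0) H0)
                (CV_mult _ _ _ _ (Hc c1) H1)) (CV_mult _ _ _ _ (Hc c2) H2)) as H.
  assert (ES : forall n, sum_f_R0 (fun m => c0 * a0 m + c1 * a1 m + c2 * a2 m) n
                        = c0 * sum_f_R0 a0 n + c1 * sum_f_R0 a1 n + c2 * sum_f_R0 a2 n).
  { induction n as [|n IH]; simpl; [|rewrite IH]; ring. }
  intros e He. destruct (H e He) as [N HN]. exists N. intros n Hn. rewrite ES. exact (HN n Hn).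
Qed.

Definition Fmap_image k idx (n : nat) (B : pt -> Prop) : pt -> Prop :=
  fun x => exists y, B y /\ x = Fmap k idx n y.

Section MeasureRecursion.
Variables (k : nat) (idx : nat -> nat * nat) (r : R).
Variables (h : nat -> pt -> R) (nu : nat -> (pt -> Prop) -> R).
Hypothesis hk : (2 <= k)%nat.
Hypothesis hidx : valid_enum k idx.
Hypothesis hr : renorm k idx r.
Hypothesis hharm : forall i, (i < 3)%nat -> harmonic k idx r (h i).
Hypothesis hbd : forall i j, (i < 3)%nat -> (j < 3)%nat ->
  h i (q j) = if Nat.eqb i j then 1 else 0.
Hypothesis hnu : forall i, (i < 3)%nat -> borel_measure_on (in_K k idx) (nu i).
Hypothesis hcell : forall i w, (i < 3)%nat -> word_ok k w ->
  Un_cv (fun m => Em k idx r (fun x => h i (Fw k idx w x)) m)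
        (r ^ length w * nu i (cell k idx w)).

Let K := in_K k idx.

(* Two cells are either nested or meet inside an overlap, so adjoining the Borel subsets of
   overlaps turns the cells into a pi-system. *)
Definition cell_pi (B : pt -> Prop) : Prop :=
  (exists w, word_ok k w /\ B = cell k idx w) \/
  (borel B /\ exists u n, word_ok k u /\ (n < dnum k)%nat /\ forall x, B x -> overlap k idx u n x).

Lemma cell_pi_borel_in B : cell_pi B -> borel_in K B.
Proof.
  intros [[w [Hw ->]]|[HB [u [n [Hu [Hn Hs]]]]]].
  - apply (borel_in_cell k idx hk hidx w Hw).
  - split; [exact HB|]. intros x Hx.
    apply (proj2 (borel_in_overlap k idx hk hidx u n Hu Hn)), Hs, Hx.
Qed.

Lemma cell_pi_inter A B : cell_pi A -> cell_pi B -> cell_pi (fun x => A x /\ B x).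
Proof.
  intros HA HB.
  assert (Hborel : borel (fun x => A x /\ B x))
    by (apply borel_inter; [apply (cell_pi_borel_in A HA) | apply (cell_pi_borel_in B HB)]).
  destruct HA as [[w1 [Hw1 ->]]|[_ [u [n [Hu [Hn Hs]]]]]].
  2:{ right. split; [exact Hborel|]. exists u, n. split; [exact Hu|]. split; [exact Hn|].
      intros x [Hx _]. exact (Hs x Hx). }
  destruct HB as [[w2 [Hw2 ->]]|[_ [u [n [Hu [Hn Hs]]]]]].
  2:{ right. split; [exact Hborel|]. exists u, n. split; [exact Hu|]. split; [exact Hn|].
      intros x [_ Hx]. exact (Hs x Hx). }
  destruct (list_prefix_cases w1 w2)
    as [[v ->]|[[v ->]|[u [a [b [v1 [v2 [Hab [-> ->]]]]]]]]].
  - left. exists (w1 ++ v). split; [exact Hw2|]. apply set_eq. intros x. split; [tauto|].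
    apply Forall_app in Hw2 as [_ Hv]. intros H. split; [|exact H].
    exact (cell_app_prefix k idx hk hidx _ _ _ Hv H).
  - left. exists (w2 ++ v). split; [exact Hw1|]. apply set_eq. intros x. split; [tauto|].
    apply Forall_app in Hw1 as [_ Hv]. intros H. split; [exact H|].
    exact (cell_app_prefix k idx hk hidx _ _ _ Hv H).
  - right. split; [exact Hborel|].
    apply Forall_app in Hw1 as [Hu Hav]. apply Forall_app in Hw2 as [_ Hbv].
    apply Forall_cons_iff in Hav as [Ha Hv1]. apply Forall_cons_iff in Hbv as [Hb Hv2].
    assert (Hpre : forall c v x, word_ok k v -> cell k idx (u ++ c :: v) x ->
                                 cell k idx (u ++ c :: nil) x).
    { intros c v x Hv Hx. apply (cell_app_prefix k idx hk hidx _ v); [exact Hv|].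
      rewrite <- app_assoc. exact Hx. }
    destruct (Nat.lt_total a b) as [Hlt|[Heq|Hlt]]; [| contradiction |].
    + exists u, b. split; [exact Hu|]. split; [exact Hb|]. intros x [H1 H2].
      split; [exact (Hpre b v2 x Hv2 H2)|]. exists a. split; [exact Hlt | exact (Hpre a v1 x Hv1 H1)].
    + exists u, a. split; [exact Hu|]. split; [exact Ha|]. intros x [H1 H2].
      split; [exact (Hpre a v1 x Hv1 H1)|]. exists b. split; [exact Hlt | exact (Hpre b v2 x Hv2 H2)].
Qed.

Let cell_dynkin := dynkin K cell_pi.

Lemma cell_dynkin_cunion (A : nat -> pt -> Prop) :
  (forall n, cell_dynkin (A n)) -> cell_dynkin (fun x => exists n, A n x).
Proof.
  apply dynkin_cunion; [|exact cell_pi_inter].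
  intros B HB. apply (proj2 (cell_pi_borel_in B HB)).
Qed.

Lemma cell_dynkin_borel B : borel B -> cell_dynkin (fun x => B x /\ K x).
Proof.
  induction 1 as [U HU|A HA IH|A HA IH].
  - set (piece := fun m i x => (i < length (words (dnum k) m))%nat /\
           (forall y, cell k idx (nth i (words (dnum k) m) nil) y -> U y) /\
           cell k idx (nth i (words (dnum k) m) nil) x).
    apply (dynkin_ext _ _ (fun x => exists m i, piece m i x)).
    + apply cell_dynkin_cunion. intros m. apply cell_dynkin_cunion. intros i.
      destruct (classic ((i < length (words (dnum k) m))%nat /\
                  forall y, cell k idx (nth i (words (dnum k) m) nil) y -> U y)) as [Hc|Hc].
      * apply (dynkin_ext _ _ (cell k idx (nth i (words (dnum k) m) nil))).
        -- apply dynkin_gen. left. exists (nth i (words (dnum k) m) nil). split; [|reflexivity].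
           exact (proj1 (proj1 (In_words _ _ _) (nth_In _ nil (proj1 Hc)))).
        -- intros x. unfold piece. tauto.
      * apply (dynkin_ext _ _ (fun _ => False)); [apply dynkin_empty | intros x; unfold piece; tauto].
    + intros x. split.
      * intros [m [i [Hi [HUc Hx]]]]. split; [exact (HUc x Hx)|].
        apply (cell_in_K k idx hk hidx (nth i (words (dnum k) m) nil) x); [|exact Hx].
        exact (proj1 (proj1 (In_words _ _ _) (nth_In _ nil Hi))).
      * intros [Ux Kx]. destruct (open_cell_nbhd k idx hk hidx U x HU Ux Kx) as [m [w [Hw [Hxw Hsub]]]].
        destruct (In_nth _ _ nil Hw) as [i [Hi Hnth]].
        exists m, i. unfold piece. rewrite Hnth. auto.
  - apply (dynkin_ext _ _ (fun x => K x /\ ~ (A x /\ K x))); [apply dynkin_compl, IH | intros x; tauto].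
  - apply (dynkin_ext _ _ (fun x => exists n, A n x /\ K x)); [apply cell_dynkin_cunion, IH|].
    intros x. split; [intros [n [H1 H2]] | intros [[n H1] H2]]; eauto.
Qed.

Section ScalingLaw.
Variables (n j : nat).
Hypothesis hn : (n < dnum k)%nat.
Hypothesis hj : (j < 3)%nat.

Definition scaling_law (B : pt -> Prop) : Prop :=
  borel_in K B /\
  nu j (Fmap_image k idx n B) = sumR 3 (fun i => mu k idx r h n j i * nu i B).

Lemma borel_in_Fmap_image B : borel_in K B -> borel_in K (Fmap_image k idx n B).
Proof.
  intros [HB HBK]. split; [apply borel_image_Fmap; assumption|].
  intros x [y [Hy ->]]. exact (in_K_Fmap k idx hk hidx n y hn (HBK y Hy)).
Qed.

Lemma Fmap_image_disj A B :
  (forall x, A x -> B x -> False) ->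
  forall x, Fmap_image k idx n A x -> Fmap_image k idx n B x -> False.
Proof.
  intros Hd x [y [Hy ->]] [z [Hz Hzy]].
  apply Fmap_inj in Hzy; [subst z; exact (Hd y Hy Hz) | exact hk].
Qed.

Lemma scaling_law_cell w : word_ok k w -> scaling_law (cell k idx w).
Proof.
  intros Hw. split; [apply borel_in_cell; assumption|].
  apply (nu_cell_Fmap k idx r h nu hr hharm hbd hcell); assumption.
Qed.

Lemma scaling_law_overlap_subset B u m : borel B -> word_ok k u -> (m < dnum k)%nat ->
  (forall x, B x -> overlap k idx u m x) -> scaling_law B.
Proof.
  intros HB Hu Hm Hs.
  assert (HBK : borel_in K B) by (split; [exact HB | intros x Hx; apply (proj2 (borel_in_overlap k idx hk hidx u m Hu Hm)), Hs, Hx]).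
  assert (Hnull : forall i u' C, (i < 3)%nat -> word_ok k u' -> borel_in K C ->
                    (forall x, C x -> overlap k idx u' m x) -> nu i C = 0).
  { intros i u' C Hi Hu' HC HCs. apply Rle_antisym.
    - rewrite <- (nu_overlap k idx r h nu hk hidx hr hharm hnu hcell i u' m Hi Hu' Hm).
      apply (nu_mono _ _ (hnu i Hi)); [exact HC | apply borel_in_overlap; assumption | exact HCs].
    - apply (nu_ge0 _ _ (hnu i Hi)), HC. }
  split; [exact HBK|]. rewrite sumR_3, !(Hnull _ u B) by (assumption || lia).
  rewrite (Hnull j (n :: u)); [ring | exact hj | constructor; assumption | |].
  - apply borel_in_Fmap_image, HBK.
  - intros x [y [Hy ->]]. destruct (Hs y Hy) as [H1 [l [Hl H2]]].
    split; [apply cell_cons_Fmap, H1|]. exists l. split; [exact Hl | apply cell_cons_Fmap, H2].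
Qed.

Lemma scaling_law_gen B : cell_pi B -> scaling_law B.
Proof.
  intros [[w [Hw ->]]|[HB [u [m [Hu [Hm Hs]]]]]].
  - apply scaling_law_cell, Hw.
  - apply (scaling_law_overlap_subset B u m); assumption.
Qed.

Lemma scaling_law_full : scaling_law K.
Proof. unfold K. rewrite <- (cell_nil k idx). apply scaling_law_cell. constructor. Qed.

Lemma scaling_law_compl B : scaling_law B -> scaling_law (fun x => K x /\ ~ B x).
Proof.
  intros [HB E]. destruct scaling_law_full as [HK EK].
  split; [apply borel_in_diff; [exact HK | apply HB]|].
  replace (Fmap_image k idx n (fun x => K x /\ ~ B x))
    with (fun x => Fmap_image k idx n K x /\ ~ Fmap_image k idx n B x).
  - assert (Hi : forall i, (i < 3)%nat -> nu i (fun x => K x /\ ~ B x) = nu i K - nu i B).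
    { intros i Hi. apply (nu_diff _ _ (hnu i Hi)); [exact HK | exact HB | apply HB]. }
    rewrite (nu_diff _ _ (hnu j hj)).
    + rewrite EK, E, !sumR_3, !Hi by lia. ring.
    + apply borel_in_Fmap_image, HK.
    + apply borel_in_Fmap_image, HB.
    + intros x [y [Hy ->]]. exists y. split; [apply (proj2 HB), Hy | reflexivity].
  - apply set_eq. intros x. split.
    + intros [[y [Hy ->]] HnB]. exists y. split; [split; [exact Hy|] | reflexivity].
      intros HBy. apply HnB. exists y. auto.
    + intros [y [[Hy HnB] ->]]. split; [exists y; auto|].
      intros HB'. exact (Fmap_image_disj B (fun x => K x /\ ~ B x) (fun z H1 H2 => proj2 H2 H1) _ HB'
                           (ex_intro _ y (conj (conj Hy HnB) eq_refl))).
Qed.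

Lemma scaling_law_disj_cunion (A : nat -> pt -> Prop) :
  (forall m, scaling_law (A m)) -> (forall m m' x, m <> m' -> A m x -> A m' x -> False) ->
  scaling_law (fun x => exists m, A m x).
Proof.
  intros HA Hdisj.
  assert (HAK : forall m, borel_in K (A m)) by (intros m; apply HA).
  split.
  { split; [apply borel_cunion; intros; apply HAK|]. intros x [m Hm]. exact (proj2 (HAK m) x Hm). }
  apply (uniqueness_sum (fun m => nu j (Fmap_image k idx n (A m)))).
  - replace (Fmap_image k idx n (fun x => exists m, A m x))
      with (fun x => exists m, Fmap_image k idx n (A m) x).
    + apply (proj2 (proj2 (hnu j hj))).
      * intros m. apply borel_in_Fmap_image, HAK.
      * intros m m' x Hmm'. apply Fmap_image_disj. intros y. apply Hdisj, Hmm'.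
    + apply set_eq. intros x. split.
      * intros [m [y [Hy ->]]]. exists y. split; [exists m|]; auto.
      * intros [y [[m Hy] ->]]. exists m, y. auto.
  - apply (infinite_sum_ext (fun m => sumR 3 (fun i => mu k idx r h n j i * nu i (A m)))).
    + intros m. symmetry. apply HA.
    + rewrite sumR_3.
      apply (infinite_sum_ext (fun m => mu k idx r h n j 0 * nu 0%nat (A m)
                 + mu k idx r h n j 1 * nu 1%nat (A m) + mu k idx r h n j 2 * nu 2%nat (A m))).
      * intros m. rewrite sumR_3. reflexivity.
      * assert (Hser : forall i, (i < 3)%nat ->
                  infinite_sum (fun m => nu i (A m)) (nu i (fun x => exists m, A m x))).
        { intros i Hi. apply (proj2 (proj2 (hnu i Hi))); assumption. }
        apply infinite_sum_lin3; apply Hser; lia.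
Qed.

Lemma scaling_law_cell_dynkin B : cell_dynkin B -> scaling_law B.
Proof.
  induction 1 as [B HB| |B _ IH|A _ IH Hdisj].
  - apply scaling_law_gen, HB.
  - apply scaling_law_full.
  - apply scaling_law_compl, IH.
  - apply scaling_law_disj_cunion; assumption.
Qed.

End ScalingLaw.

Lemma nu_first_level j A : (j < 3)%nat -> borel_in K A ->
  nu j A = sumR (dnum k) (fun n => nu j (fun x => A x /\ cell k idx (n :: nil) x)).
Proof.
  intros Hj HA. pose proof (hnu j Hj) as Hm.
  assert (HX : forall l, (l < dnum k)%nat -> borel_in K (fun x => A x /\ cell k idx (l :: nil) x))
    by (intros; apply borel_in_inter; [exact HA | apply borel_cell, hk]).
  rewrite <- (Rminus_0_r (sumR _ _)).
  pose proof (nu_finite_union _ _ Hm _ (dnum k) HX) as E. cbv beta in E.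
  replace (fun x => exists l, (l < dnum k)%nat /\ A x /\ cell k idx (l :: nil) x) with A in E.
  - rewrite E. f_equal. rewrite sumR_lsum, <- (lsum_const0 (seq 0 (dnum k))).
    apply lsum_ext. intros l Hl. apply in_seq in Hl.
    assert (Hovl : borel_in K (fun x => (A x /\ cell k idx (l :: nil) x) /\
                     exists l', (l' < l)%nat /\ A x /\ cell k idx (l' :: nil) x)).
    { apply borel_in_inter; [apply HX; lia|].
      apply borel_lt_union. intros. apply HX. lia. }
    apply Rle_antisym.
    + rewrite <- (nu_overlap k idx r h nu hk hidx hr hharm hnu hcell j nil l Hj (Forall_nil _)) by lia.
      apply (nu_mono _ _ Hm); [exact Hovl | apply (borel_in_overlap k idx hk hidx); [constructor | lia] |].
      intros x [[_ H1] [l' [Hl' [_ H2]]]]. split; [exact H1|]. exists l'. auto.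
    + apply (nu_ge0 _ _ Hm), Hovl.
  - apply set_eq. intros x. split.
    + intros Hx. destruct (in_K_Fmap_cover k idx hk hidx x (proj2 HA x Hx)) as [l [Hl [y [Hy ->]]]].
      exists l. repeat split; [exact Hl | exact Hx | exists y; auto].
    + intros [l [_ [Hx _]]]. exact Hx.
Qed.

Lemma nu_self_similar A j : borel A -> (forall x, A x -> K x) -> (j < 3)%nat ->
  nu j A = sumR (dnum k) (fun n => sumR 3 (fun i => mu k idx r h n j i *
                                   nu i (fun x => K x /\ A (Fmap k idx n x)))).
Proof.
  intros HA HAK Hj. rewrite (nu_first_level j A Hj (conj HA HAK)), !sumR_lsum.
  apply lsum_ext. intros n Hn. apply in_seq in Hn.
  assert (Hlaw : scaling_law n j (fun x => K x /\ A (Fmap k idx n x))).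
  { apply scaling_law_cell_dynkin; [lia | exact Hj|].
    apply (dynkin_ext _ _ (fun x => A (Fmap k idx n x) /\ K x)); [|intros x; tauto].
    apply cell_dynkin_borel, borel_preimage; [apply continuous_Fmap | exact HA]. }
  rewrite <- (proj2 Hlaw). f_equal. apply set_eq. intros x. split.
  - intros [Hx [y [Hy ->]]]. exists y. auto.
  - intros [y [[Hy HAy] ->]]. split; [exact HAy | exists y; auto].
Qed.

End MeasureRecursion.

Theorem theorem2p9
  (k : nat) (hk : (2 <= k)%nat)
  (idx : nat -> nat * nat) (hidx : valid_enum k idx)
  (r : R) (hr : renorm k idx r)
  (h : nat -> pt -> R)
  (hcont : forall i, (i < 3)%nat -> continuous_on_K k idx (h i))
  (hharm : forall i, (i < 3)%nat -> harmonic k idx r (h i))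
  (hbd : forall i j, (i < 3)%nat -> (j < 3)%nat ->
           h i (q j) = if Nat.eqb i j then 1 else 0)
  (nu : nat -> (pt -> Prop) -> R)
  (hnu : forall i, (i < 3)%nat -> borel_measure_on (in_K k idx) (nu i))
  (hcell : forall i w, (i < 3)%nat -> word_ok k w ->
           Un_cv (fun m => Em k idx r (fun x => h i (Fw k idx w x)) m)
                 (r ^ length w * nu i (cell k idx w))) :
  (forall n w j, (n < dnum k)%nat -> word_ok k w -> (j < 3)%nat ->
     nu j (fun x => exists y, cell k idx w y /\ x = Fmap k idx n y)
     = sumR 3 (fun i => mu k idx r h n j i * nu i (cell k idx w))) /\
  (forall A, borel A -> (forall x, A x -> in_K k idx x) ->
   forall j, (j < 3)%nat ->
     nu j A = sumR (dnum k) (fun n =>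
                sumR 3 (fun i => mu k idx r h n j i *
                          nu i (fun x => in_K k idx x /\ A (Fmap k idx n x))))).
Proof.
  split.
  - exact (nu_cell_Fmap k idx r h nu hr hharm hbd hcell).
  - intros A HA HAK j Hj.
    exact (nu_self_similar k idx r h nu hk hidx hr hharm hbd hnu hcell A j HA HAK Hj).
Qed.
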